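(* Let $R$ be a semi-local ring containing $\mathbb Q$, let $n\ge0$ and $m\ge1$. Then the map $d\colon tR_m\otimes_R\Omega^n_R\to\widetilde\Omega^{n+1}_{R_m}$, $t^i\otimes\omega\mapsto d(t^i\omega)$, is injective.
   Context: $R_m=R[t]/(t^{m+1})$, $tR_m$ the ideal generated by $t$; $\Omega^n$ denotes absolute Kähler differentials, $\widetilde\Omega^{n}_{R_m}=\ker(\Omega^{n}_{R_m}\to\Omega^{n}_R)$, and $d$ is the exterior derivative. *)

From HB Require Import structures.
From mathcomp Require Import all_boot all_order all_algebra.
Set Implicit Arguments. Unset Strict Implicit. Unset Printing Implicit Defensive.
Import Order.TTheory GRing.Theory Num.Theory.
Local Open Scope ring_scope.

Section Ideals.
Variable R : comNzRingType.

Definition is_ideal (I : R -> Prop) : Prop :=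
  [/\ I 0, (forall x y, I x -> I y -> I (x + y)) & (forall r x, I x -> I (r * x))].

Definition is_maximal_ideal (I : R -> Prop) : Prop :=
  [/\ is_ideal I, ~ I 1 &
      (forall J : R -> Prop, is_ideal J -> (forall x, I x -> J x) ->
         ~ J 1 -> forall x, J x -> I x)].

Definition semilocal : Prop :=
  exists (k : nat) (M : nat -> R -> Prop),
    forall I, is_maximal_ideal I -> exists2 i, (i < k)%N & forall x, I x <-> M i x.

(* R contains Q : every positive integer is invertible in R *)
Definition contains_Q : Prop :=
  forall k : nat, (0 < k)%N -> exists y : R, k%:R * y = 1.

End Ideals.

(* R_m = R[t]/(t^(m+1)) *)
Definition Rtrunc (R : comNzRingType) (m : nat) := {poly %/ ('X^(m.+1) : {poly R})}.
Definition Rincl (R : comNzRingType) (m : nat) (r : R) : Rtrunc R m := qpolyC _ r.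
Definition tvar (R : comNzRingType) (m : nat) : Rtrunc R m := 'qX.

(* Absolute Kaehler differentials Omega^n_A (over Z), by presentation. *)
(* A formal sum  sum_k c_k (a_k, [b_1;..;b_n])  with c_k : int stands  *)
(* for  sum_k c_k a_k db_1 /\ ... /\ db_n .  Omega^n_A is the quotient *)
(* of the free Z-module on A x A^n by the subgroup generated by:       *)
(*   additivity in the coefficient a, additivity of d in each slot,    *)
(*   the Leibniz rule in each slot, and the alternating relations      *)
(*   (equal entries give 0; swapping two entries changes the sign).    *)
Section Kaehler.
Variable A : comNzRingType.

Definition fsum := seq (int * (A * seq A)).

Definition fcoef (l : fsum) (k : A * seq A) : int :=
  \sum_(p <- l | p.2 == k) p.1.

Definition swap_at (b : seq A) (i j : nat) : seq A :=
  set_nth 0 (set_nth 0 b i (nth 0 b j)) j (nth 0 b i).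

Inductive omega_gen (n : nat) : fsum -> Prop :=
| gen_addc (a a' : A) (b : seq A) : size b = n ->
    omega_gen n [:: (1, (a + a', b)); (-1, (a, b)); (-1, (a', b))]
| gen_adds (a : A) (b : seq A) (i : nat) (x y : A) : size b = n -> (i < n)%N ->
    omega_gen n [:: (1, (a, set_nth 0 b i (x + y)));
                    (-1, (a, set_nth 0 b i x)); (-1, (a, set_nth 0 b i y))]
| gen_leibniz (a : A) (b : seq A) (i : nat) (x y : A) : size b = n -> (i < n)%N ->
    omega_gen n [:: (1, (a, set_nth 0 b i (x * y)));
                    (-1, (a * x, set_nth 0 b i y)); (-1, (a * y, set_nth 0 b i x))]
| gen_alt (a : A) (b : seq A) (i j : nat) : size b = n -> (i < j)%N -> (j < n)%N ->
    nth 0 b i = nth 0 b j -> omega_gen n [:: (1, (a, b))]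
| gen_anti (a : A) (b : seq A) (i j : nat) : size b = n -> (i < j)%N -> (j < n)%N ->
    omega_gen n [:: (1, (a, b)); (1, (a, swap_at b i j))].

Definition omega_elt (n : nat) (l : fsum) : bool :=
  all (fun p => size p.2.2 == n) l.

Definition omega_zero (n : nat) (l : fsum) : Prop :=
  exists gs : seq (int * fsum),
    (forall g, g \in gs -> omega_gen n g.2) /\
    forall k, fcoef l k = \sum_(g <- gs) g.1 * fcoef g.2 k.

(* exterior derivative  d(a db_1..db_n) = da db_1 .. db_n *)
Definition dform (l : fsum) : fsum :=
  map (fun p => (p.1, (1, p.2.1 :: p.2.2))) l.

Definition scal_fsum (x : A) (l : fsum) : fsum :=
  map (fun p => (p.1, (x * p.2.1, p.2.2))) l.

End Kaehler.

Definition map_fsum (A B : comNzRingType) (f : A -> B) (l : fsum A) : fsum B :=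
  map (fun p => (p.1, (f p.2.1, map f p.2.2))) l.

(* Since tR_m is the
   free R-module with basis t, t^2, ..., t^m, an element of the source is
   sum_{i=1}^m t^i (x) w_i with w_i in Omega^n_R; it is sent to
   sum_i d(t^i w_i). Index i : 'I_m corresponds to t^(i+1). *)
Definition d_tensor (R : comNzRingType) (m : nat) (w : 'I_m -> fsum R)
  : fsum (Rtrunc R m) :=
  dform (flatten [seq scal_fsum (tvar R m ^+ (val i).+1) (map_fsum (@Rincl R m) (w i))
                 | i : 'I_m <- enum 'I_m]).

(* For e < m, taking the coefficient of t^e dt is an additive map
   Omega^{n+1}_{R_m} -> Omega^n_R: writing b = sum_k b_k t^k one has
   db = sum_k t^k db_k + b' dt, so a db_0 ... db_n expands into terms with at
   most one dt; working modulo t^(m+1) perturbs a coefficient polynomial by a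
   multiple of t^(m+1) and its derivative by a multiple of t^m, neither of which
   reaches t^e. This map sends d(t^(i+1) w) = t^(i+1) dw + (i+1) t^i dt w to
   (e+1) w if i = e and to 0 otherwise, so once e+1 is invertible it splits d on
   the summand t^(e+1) (x) Omega^n_R. It is compatible with the alternating
   relation because 2 is invertible. *)

From mathcomp Require Import all_boot all_order all_algebra.
From HB Require Import structures.
From mathcomp Require Import boolp generic_quotient ring.
Set Implicit Arguments. Unset Strict Implicit. Unset Printing Implicit Defensive.
Import GRing.Theory Pdiv.CommonRing.
Local Open Scope ring_scope.

Lemma subr0_eqD (V : zmodType) (x y z : V) : x - y - z = 0 -> x = y + z.
Proof. by rewrite -addrA -opprD => /subr0_eq. Qed.

Section FormalSums.
Variable A : comNzRingType.
Implicit Types (l : fsum A) (k : A * seq A).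

Definition fsum_opp l : fsum A := [seq (- p.1, p.2) | p <- l].
Definition fsum_scale (c : int) l : fsum A := [seq (c * p.1, p.2) | p <- l].

Lemma fcoef_cat l1 l2 k : fcoef (l1 ++ l2) k = fcoef l1 k + fcoef l2 k.
Proof. by rewrite /fcoef big_cat. Qed.

Lemma fcoef_opp l k : fcoef (fsum_opp l) k = - fcoef l k.
Proof. by rewrite /fcoef big_map sumrN. Qed.

Lemma fcoef_scale c l k : fcoef (fsum_scale c l) k = c * fcoef l k.
Proof. by rewrite /fcoef big_map mulr_sumr. Qed.

Lemma fcoef_nil k : fcoef [::] k = 0.
Proof. by rewrite /fcoef big_nil. Qed.

Section Eval.
Variables (V : zmodType) (G : A * seq A -> V).

Definition fsum_eval l : V := \sum_(p <- l) G p.2 *~ p.1.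

Lemma fsum_eval_cat l1 l2 : fsum_eval (l1 ++ l2) = fsum_eval l1 + fsum_eval l2.
Proof. exact: big_cat. Qed.

Lemma fsum_eval1 k : fsum_eval [:: (1, k)] = G k.
Proof. by rewrite /fsum_eval big_seq1. Qed.

Lemma fsum_eval2 k1 k2 : fsum_eval [:: (1, k1); (1, k2)] = G k1 + G k2.
Proof. by rewrite /fsum_eval !big_cons big_nil addr0. Qed.

Lemma fsum_eval3 k1 k2 k3 :
  fsum_eval [:: (1, k1); (-1, k2); (-1, k3)] = G k1 - G k2 - G k3.
Proof. by rewrite /fsum_eval !big_cons big_nil addr0 !mulrN1z addrA. Qed.

Lemma fsum_eval_scale c l : fsum_eval (fsum_scale c l) = fsum_eval l *~ c.
Proof.
by rewrite /fsum_eval big_map mulrz_suml; apply: eq_bigr => p _; rewrite mulrC mulrzA.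
Qed.

Lemma fsum_eval_keys l (s : seq (A * seq A)) : uniq s -> {subset map snd l <= s} ->
  fsum_eval l = \sum_(k <- s) G k *~ fcoef l k.
Proof.
move=> us sub; rewrite /fsum_eval.
under [RHS]eq_bigr => k _ do rewrite /fcoef mulrz_sumr big_mkcond /=.
rewrite exchange_big /= big_seq [RHS]big_seq; apply: eq_bigr => p pl.
rewrite (bigD1_seq p.2) ?(sub _ (map_f _ pl)) //= eqxx big1 ?addr0 // => k /negbTE.
by rewrite eq_sym => ->.
Qed.

Lemma eq_fsum_eval l1 l2 : fcoef l1 =1 fcoef l2 -> fsum_eval l1 = fsum_eval l2.
Proof.
move=> E; have us := undup_uniq (map snd (l1 ++ l2)).
have sub1 : {subset map snd l1 <= undup (map snd (l1 ++ l2))}.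
  by move=> k; rewrite mem_undup map_cat mem_cat => ->.
have sub2 : {subset map snd l2 <= undup (map snd (l1 ++ l2))}.
  by move=> k; rewrite mem_undup map_cat mem_cat => ->; rewrite orbT.
rewrite (fsum_eval_keys us sub1) (fsum_eval_keys us sub2).
by apply: eq_bigr => k _; rewrite E.
Qed.

Lemma fsum_eval_omega_zero N :
    (forall g, omega_gen N g -> fsum_eval g = 0) ->
  forall l, omega_zero N l -> fsum_eval l = 0.
Proof.
move=> Ggen l [gs [gen_gs Egs]].
have -> : fsum_eval l = fsum_eval (flatten [seq fsum_scale g.1 g.2 | g <- gs]).
  apply: eq_fsum_eval => k; rewrite Egs; elim: gs {gen_gs Egs} => [|g gs IH] /=.
    by rewrite big_nil fcoef_nil.
  by rewrite big_cons fcoef_cat fcoef_scale IH.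
elim: gs gen_gs {Egs} => [|g gs IH] gen_gs /=; first by rewrite /fsum_eval big_nil.
rewrite fsum_eval_cat fsum_eval_scale (Ggen _ (gen_gs g (mem_head _ _))) mul0rz add0r.
by apply: IH => g' g'gs; apply: gen_gs; rewrite inE g'gs orbT.
Qed.

End Eval.
End FormalSums.

Section SeqSurgery.
Variables (T : Type) (x0 : T).
Implicit Types (p q r s : seq T) (x y z : T).

Lemma set_nth_cat p s k z : set_nth x0 (p ++ s) (size p + k) z = p ++ set_nth x0 s k z.
Proof. by elim: p => //= a p ->. Qed.

Lemma set_nth_cat_mid p q x z : set_nth x0 (p ++ x :: q) (size p) z = p ++ z :: q.
Proof. by have := set_nth_cat p (x :: q) 0 z; rewrite addn0. Qed.

Lemma nth_cat_mid p q x : nth x0 (p ++ x :: q) (size p) = x.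
Proof. by rewrite nth_cat ltnn subnn. Qed.

Lemma split_at2 s i j : (i < j < size s)%N ->
  exists p q r, [/\ s = p ++ nth x0 s i :: q ++ nth x0 s j :: r, size p = i &
                    (size p + (size q).+1)%N = j].
Proof.
case/andP=> lt_ij lt_js; have lt_is := ltn_trans lt_ij lt_js.
exists (take i s), (take (j - i.+1) (drop i.+1 s)), (drop j.+1 s).
have size_p : size (take i s) = i by rewrite size_takel // ltnW.
have size_q : size (take (j - i.+1) (drop i.+1 s)) = (j - i.+1)%N.
  by rewrite size_takel // size_drop leq_sub2r // ltnW.
split=> //; last by rewrite size_p size_q -addSnnS subnKC.
rewrite -{1}(cat_take_drop i s) (drop_nth x0 lt_is); congr (_ ++ _ :: _).
rewrite -{1}(cat_take_drop (j - i.+1) (drop i.+1 s)) drop_drop subnK //.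
by rewrite (drop_nth x0 lt_js).
Qed.

End SeqSurgery.

Section AlternatingSwap.
Variables (T : Type) (V : zmodType) (G : seq T -> V).
Hypothesis G_swap_adj : forall p x y r, G (p ++ x :: y :: r) = - G (p ++ y :: x :: r).

Lemma alt_move p x q r : G (p ++ x :: q ++ r) = G (p ++ q ++ x :: r) *~ (-1) ^+ size q.
Proof.
elim: q p => [|z q IH] p //=.
by rewrite G_swap_adj -cat_rcons IH cat_rcons exprS mulN1r mulrNz.
Qed.

Lemma alt_swap p x q y r : G (p ++ x :: q ++ y :: r) = - G (p ++ y :: q ++ x :: r).
Proof.
rewrite alt_move (alt_move p y q (x :: r)) catA G_swap_adj -catA.
by rewrite mulNrz.
Qed.

End AlternatingSwap.

Lemma swap_at_cat (A : comNzRingType) (p q r : seq A) x y :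
  swap_at (p ++ x :: q ++ y :: r) (size p) (size p + (size q).+1) = p ++ y :: q ++ x :: r.
Proof.
rewrite /swap_at nth_cat_mid set_nth_cat_mid set_nth_cat /= -[size q]addn0 set_nth_cat.
by rewrite addn0 nth_cat ltnNge leq_addr /= addKn /= nth_cat_mid.
Qed.

Section OmegaQuotient.
Variables (A : comNzRingType) (n : nat).
Implicit Types l : fsum A.
Local Notation zero := (@omega_zero A n).

Lemma omega_zero_nil : zero [::].
Proof. by exists [::]; split => // k; rewrite fcoef_nil big_nil. Qed.

Lemma omega_zero_fcoefD l l1 l2 :
  (forall k, fcoef l k = fcoef l1 k + fcoef l2 k) -> zero l1 -> zero l2 -> zero l.
Proof.
move=> E [g1 [gen1 E1]] [g2 [gen2 E2]]; exists (g1 ++ g2); split.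
  by move=> g; rewrite mem_cat => /orP [] ?; [apply: gen1 | apply: gen2].
by move=> k; rewrite E E1 E2 big_cat.
Qed.

Lemma eq_omega_zero l1 l2 : fcoef l1 =1 fcoef l2 -> zero l2 -> zero l1.
Proof.
move=> E z2; apply: omega_zero_fcoefD z2 omega_zero_nil => k.
by rewrite E fcoef_nil addr0.
Qed.

Lemma omega_zero_opp l : zero l -> zero (fsum_opp l).
Proof.
move=> [gs [gen_gs E]]; exists [seq (- g.1, g.2) | g <- gs]; split.
  by move=> g /mapP [g' /gen_gs ? ->].
by move=> k; rewrite fcoef_opp E big_map -sumrN; apply: eq_bigr => g _; rewrite mulNr.
Qed.

Lemma omega_zero_gen g : omega_gen n g -> zero g.
Proof.
move=> gen_g; exists [:: (1, g)]; split; first by move=> g'; rewrite inE => /eqP ->.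
by move=> k; rewrite big_seq1 mul1r.
Qed.

Definition omega_eqv : rel (fsum A) := fun l1 l2 => `[< zero (l1 ++ fsum_opp l2) >].

Lemma omega_eqv_refl : reflexive omega_eqv.
Proof.
move=> l; apply/asboolP; apply: (eq_omega_zero _ omega_zero_nil) => k.
by rewrite fcoef_cat fcoef_opp subrr fcoef_nil.
Qed.

Lemma omega_eqv_sym : symmetric omega_eqv.
Proof.
by move=> l1 l2; apply/asboolP/asboolP => /omega_zero_opp z; apply: eq_omega_zero z => k;
  rewrite !fcoef_opp !fcoef_cat !fcoef_opp opprD opprK addrC.
Qed.

Lemma omega_eqv_trans : transitive omega_eqv.
Proof.
move=> l2 l1 l3 /asboolP z12 /asboolP z23; apply/asboolP.
by apply: omega_zero_fcoefD z12 z23 => k; rewrite !fcoef_cat !fcoef_opp addrA subrK.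
Qed.

Canonical omega_eqv_equiv := EquivRel omega_eqv omega_eqv_refl omega_eqv_sym omega_eqv_trans.

Definition Omega := {eq_quot omega_eqv}%qT.

Definition omega_class l : Omega := (\pi_Omega l)%qT.

Lemma omega_classP l1 l2 : omega_class l1 = omega_class l2 <-> zero (l1 ++ fsum_opp l2).
Proof. by split => [/eqquotP/asboolP | z]; last apply/eqquotP/asboolP. Qed.

Lemma eq_omega_class l1 l2 : fcoef l1 =1 fcoef l2 -> omega_class l1 = omega_class l2.
Proof.
move=> E; apply/omega_classP; apply: (eq_omega_zero _ omega_zero_nil) => k.
by rewrite fcoef_cat fcoef_opp E subrr fcoef_nil.
Qed.

Lemma omega_class_repr (x : Omega) : omega_class (repr x) = x.
Proof. exact: reprK. Qed.

Lemma omega_class_ind (P : Omega -> Prop) : (forall l, P (omega_class l)) -> forall x, P x.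
Proof. by move=> Pl x; rewrite -(omega_class_repr x). Qed.

Lemma repr_omega_class l : zero (repr (omega_class l) ++ fsum_opp l).
Proof. by apply/omega_classP; rewrite omega_class_repr. Qed.

Definition omega_add (x y : Omega) := omega_class (repr x ++ repr y).
Definition omega_opp (x : Omega) := omega_class (fsum_opp (repr x)).
Definition omega_null := omega_class [::].

Lemma omega_addE l1 l2 : omega_add (omega_class l1) (omega_class l2) = omega_class (l1 ++ l2).
Proof.
apply/omega_classP; apply: omega_zero_fcoefD (repr_omega_class l1) (repr_omega_class l2) => k.
rewrite !(fcoef_cat, fcoef_opp) opprD !addrA; congr (_ + _).
by rewrite -!addrA; congr (_ + _); rewrite addrC.
Qed.

Lemma omega_oppE l : omega_opp (omega_class l) = omega_class (fsum_opp l).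
Proof.
apply/omega_classP; apply: (eq_omega_zero _ (omega_zero_opp (repr_omega_class l))) => k.
by rewrite !(fcoef_cat, fcoef_opp) opprD opprK addrC.
Qed.

Lemma omega_addA : associative omega_add.
Proof.
by elim/omega_class_ind => a; elim/omega_class_ind => b; elim/omega_class_ind => c;
  rewrite !omega_addE catA.
Qed.

Lemma omega_addC : commutative omega_add.
Proof.
elim/omega_class_ind => a; elim/omega_class_ind => b; rewrite !omega_addE.
by apply: eq_omega_class => k; rewrite !fcoef_cat addrC.
Qed.

Lemma omega_add0 : left_id omega_null omega_add.
Proof. by elim/omega_class_ind => a; rewrite omega_addE. Qed.

Lemma omega_addN : left_inverse omega_null omega_opp omega_add.
Proof.
elim/omega_class_ind => a; rewrite omega_oppE omega_addE.
by apply: eq_omega_class => k; rewrite fcoef_cat fcoef_opp addNr fcoef_nil.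
Qed.

End OmegaQuotient.

HB.instance Definition _ (A : comNzRingType) (n : nat) := Choice.on (Omega A n).
HB.instance Definition _ (A : comNzRingType) (n : nat) :=
  GRing.isZmodule.Build (Omega A n)
    (@omega_addA A n) (@omega_addC A n) (@omega_add0 A n) (@omega_addN A n).

Section OmegaForms.
Variables (A : comNzRingType) (n : nat).
Implicit Types (l g : fsum A) (a x y : A) (b p q : seq A).
Local Notation class := (@omega_class A n).

Lemma omega_class_cat l1 l2 : class (l1 ++ l2) = class l1 + class l2.
Proof. by rewrite -omega_addE. Qed.

Lemma omega_class_cons c k l : class ((c, k) :: l) = class [:: (c, k)] + class l.
Proof. exact: omega_class_cat [:: (c, k)] l. Qed.

Lemma omega_class_opp l : class (fsum_opp l) = - class l.
Proof. by rewrite -omega_oppE. Qed.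

Lemma omega_class_seq1 c k : class [:: (c, k)] = class [:: (1, k)] *~ c.
Proof.
have class0 : class [:: (0, k)] = 0.
  transitivity (class [::]); last by [].
  by apply: eq_omega_class => k'; rewrite /fcoef big_cons big_nil; case: ifP.
have classD c1 c2 : class [:: (c1 + c2, k)] = class [:: (c1, k)] + class [:: (c2, k)].
  rewrite -omega_class_cat; apply: eq_omega_class => k'.
  by rewrite fcoef_cat /fcoef !big_cons !big_nil; case: ifP; rewrite ?addr0.
have classn (j : nat) : class [:: (j%:Z, k)] = class [:: (1, k)] *+ j.
  by elim: j => [|j IH]; rewrite ?class0 // -addn1 PoszD classD IH mulrnDr.
case: c => j; first exact: classn.
by rewrite NegzE mulrNz -[LHS]/(class (fsum_opp [:: (j.+1%:Z, k)])) omega_class_opp classn.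
Qed.

Lemma omega_class_gen g : omega_gen n g -> class g = 0.
Proof. by move=> gen_g; apply/omega_classP; rewrite /= cats0; apply: omega_zero_gen. Qed.

Lemma omega_class_eq0 l : class l = 0 -> omega_zero n l.
Proof. by move/omega_classP; rewrite /= cats0. Qed.

Definition omega_form a b : Omega A n := if size b == n then class [:: (1, (a, b))] else 0.

Lemma omega_class_elt l : omega_elt n l ->
  class l = fsum_eval (fun k => omega_form k.1 k.2) l.
Proof.
elim: l => [|[c [a b]] l IH]; first by rewrite /fsum_eval big_nil.
rewrite /= => /andP [/eqP sb /IH {}IH].
by rewrite omega_class_cons omega_class_seq1 IH /fsum_eval big_cons /omega_form sb eqxx.
Qed.

Lemma omega_elt_gen g : omega_gen n g -> omega_elt n g.
Proof.
have size_set b i z : size b = n -> (i < n)%N -> size (set_nth 0 b i z) == n.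
  by move=> sb lt_in; rewrite size_set_nth sb; apply/eqP/maxn_idPr.
case=> {g} [a a' b sb | a b i x y sb lt_in | a b i x y sb lt_in | a b i j sb _ _ _ |
  a b i j sb lt_ij lt_jn];
  rewrite /omega_elt /= ?sb ?size_set ?eqxx //.
by apply/eqP/size_set => //; apply: ltn_trans lt_jn.
Qed.

Lemma omega_form_gen g : omega_gen n g -> fsum_eval (fun k => omega_form k.1 k.2) g = 0.
Proof.
by move=> gen_g; rewrite -omega_class_elt ?omega_class_gen ?omega_elt_gen.
Qed.

Lemma omega_form_size a b : size b != n -> omega_form a b = 0.
Proof. by rewrite /omega_form => /negbTE ->. Qed.

Lemma omega_formDl a a' b : omega_form (a + a') b = omega_form a b + omega_form a' b.
Proof.
have [sb|nsb] := eqVneq (size b) n; last by rewrite !omega_form_size ?addr0.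
have := omega_form_gen (gen_addc a a' sb).
by rewrite fsum_eval3 => /subr0_eqD.
Qed.

Lemma omega_form0l b : omega_form 0 b = 0.
Proof. by apply: (addIr (omega_form 0 b)); rewrite -omega_formDl !add0r. Qed.

Lemma omega_formDr a p q x y :
  omega_form a (p ++ (x + y) :: q) = omega_form a (p ++ x :: q) + omega_form a (p ++ y :: q).
Proof.
have [sb|nsb] := eqVneq (size p + (size q).+1)%N n; last first.
  by rewrite !omega_form_size ?size_cat ?addr0.
have lt_pn : (size p < n)%N by rewrite -sb addnS ltnS leq_addr.
have := omega_form_gen (gen_adds a x y (etrans (size_cat p (0 :: q)) sb) lt_pn).
by rewrite !set_nth_cat_mid fsum_eval3 => /subr0_eqD.
Qed.

Lemma omega_formMr a p q x y : omega_form a (p ++ (x * y) :: q) =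
  omega_form (a * x) (p ++ y :: q) + omega_form (a * y) (p ++ x :: q).
Proof.
have [sb|nsb] := eqVneq (size p + (size q).+1)%N n; last first.
  by rewrite !omega_form_size ?size_cat ?addr0.
have lt_pn : (size p < n)%N by rewrite -sb addnS ltnS leq_addr.
have := omega_form_gen (gen_leibniz a x y (etrans (size_cat p (0 :: q)) sb) lt_pn).
by rewrite !set_nth_cat_mid fsum_eval3 => /subr0_eqD.
Qed.

Lemma omega_form_swap a p q x y :
  omega_form a (p ++ x :: y :: q) = - omega_form a (p ++ y :: x :: q).
Proof.
have [sb|nsb] := eqVneq (size p + (size q).+2)%N n; last first.
  by rewrite !omega_form_size ?size_cat ?oppr0.
have lt_pp1 : (size p < size p + 1)%N by rewrite addn1.
have lt_p1n : (size p + 1 < n)%N by rewrite -sb addn1 !addnS !ltnS leq_addr.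
have := omega_form_gen (gen_anti a (etrans (size_cat p (x :: y :: q)) sb) lt_pp1 lt_p1n).
by rewrite -[y :: q]/([::] ++ y :: q) swap_at_cat fsum_eval2 => /eqP; rewrite addr_eq0 => /eqP.
Qed.
End OmegaForms.

Lemma deriv_XnSM (R : comNzRingType) (k : nat) (Q : {poly R}) :
  exists Q' : {poly R}, ('X^(k.+1) * Q)^`() = 'X^k * Q'.
Proof. by exists (Q *+ k.+1 + 'X * Q^`()); rewrite derivM derivXn /= exprS; ring. Qed.

Section TruncatedPolynomials.
Variables (R : comNzRingType) (m : nat).
Local Notation Rm := (Rtrunc R m).
Implicit Types (u v : R) (x y : Rm).

Definition tmonomial u (k : nat) : Rm := Rincl m u * tvar R m ^+ k.

Lemma poly_tmonomial u k :
  (tmonomial u k : {poly R}) = if (k <= m)%N then u%:P * 'X^k else 0.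
Proof.
have -> : tmonomial u k = in_qpoly 'X^(m.+1) (u%:P * 'X^k).
  rewrite rmorphM rmorphXn /=; congr (_ * _ ^+ _); apply: val_inj => /=.
  by rewrite mk_monic_Xn rmodp_small // size_polyXn (leq_ltn_trans (size_polyC_leq1 _)).
rewrite /= mk_monic_Xn; case: leqP => le_km.
  rewrite rmodp_small // size_polyXn (leq_ltn_trans (size_polyMleq _ _)) //.
  by rewrite size_polyXn addnS ltnS (leq_trans (leq_add (size_polyC_leq1 u) (leqnn k))).
by rewrite -(subnK le_km) exprD mulrA; apply/Pdiv.RingMonic.rmodp_mull/monicXn.
Qed.

Lemma coef_tmonomial u k j :
  (tmonomial u k : {poly R})`_j = if (k <= m)%N && (j == k) then u else 0.
Proof.
rewrite poly_tmonomial; case: (k <= m)%N; last by rewrite coef0.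
by rewrite coefCM coefXn; case: eqP; rewrite ?mulr1 ?mulr0.
Qed.

Lemma Rincl_tmonomial u : Rincl m u = tmonomial u 0.
Proof. by rewrite /tmonomial expr0 mulr1. Qed.

Lemma tmonomialM u v k l : tmonomial u k * tmonomial v l = tmonomial (u * v) (k + l).
Proof. by rewrite /tmonomial /Rincl qpolyCM exprD; ring. Qed.

Lemma coef_Rtrunc_gt x j : (m < j)%N -> (x : {poly R})`_j = 0.
Proof.
move=> lt_mj; apply: nth_default; apply: leq_trans lt_mj.
by apply: leq_trans (size_npoly x) _; rewrite mk_monic_Xn size_polyXn.
Qed.

Lemma Rtrunc_tmonomial_sum x : x = \sum_(k < m.+1) tmonomial (x : {poly R})`_k k.
Proof.
apply: val_inj => /=; apply/polyP => j.
rewrite (poly_of_qpoly_sum _ _ (fun k : 'I_m.+1 => tmonomial _ k)) coef_sum.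
under eq_bigr => k _ do rewrite coef_tmonomial -ltnS ltn_ord /=.
have [lt_jm|le_mj] := ltnP j m.+1.
  rewrite (bigD1 (Ordinal lt_jm)) //= eqxx big1 ?addr0 // => k /negbTE.
  by rewrite eq_sym -val_eqE /= => ->.
rewrite coef_Rtrunc_gt // big1 // => k _; case: eqP => // jk.
by move: (ltn_ord k); rewrite -jk ltnNge le_mj.
Qed.

Lemma Rtrunc_additive_eq (V : zmodType) (f g : Rm -> V) :
    {morph f : x y / x + y} -> {morph g : x y / x + y} ->
    (forall u k, (k <= m)%N -> f (tmonomial u k) = g (tmonomial u k)) ->
  f =1 g.
Proof.
move=> fD gD fg x; have f0 : f 0 = 0 by apply: (addIr (f 0)); rewrite -fD !add0r.
have g0 : g 0 = 0 by apply: (addIr (g 0)); rewrite -gD !add0r.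
rewrite (Rtrunc_tmonomial_sum x) (big_morph f fD f0) (big_morph g gD g0).
by apply: eq_bigr => k _; apply: fg; rewrite -ltnS.
Qed.

Lemma poly_RtruncM x y :
  exists Q, (x * y : {poly R}) = (x : {poly R}) * (y : {poly R}) + 'X^(m.+1) * Q.
Proof.
exists (- rdivp ((x : {poly R}) * y) 'X^(m.+1)).
rewrite poly_of_qpolyM; move: (_ * _) => p.
by rewrite mk_monic_Xn {2}(Pdiv.RingMonic.rdivp_eq (monicXn R m.+1) p); ring.
Qed.

End TruncatedPolynomials.

Section Coefficients.
Variables (R : comNzRingType) (n m e : nat) (c : R).
Hypothesis lt_em : (e < m)%N.
Local Notation Rm := (Rtrunc R m).
Local Notation form := (@omega_form R n).
Local Notation "x %:poly" := (x : {poly R}) (at level 2, format "x %:poly").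
Implicit Types (P Q : {poly R}) (pre s : seq R) (p q r : seq Rm) (u v : R) (x y : Rm).

(* [coef_t P pre [:: x_1; ...; x_j]] is the coefficient of t^e in
   P(t) d(pre) dx_1 ... dx_j once every x_i is expanded as sum_k x_ik t^k
   and dx_i is replaced by sum_k t^k dx_ik, i.e. its dt-component is dropped. *)
Fixpoint coef_t P pre r : Omega R n :=
  if r is x :: r' then \sum_(k < m.+1) coef_t (P * 'X^k) (rcons pre x%:poly`_k) r'
  else form P`_e pre.

Lemma coef_t_polyD P Q pre r : coef_t (P + Q) pre r = coef_t P pre r + coef_t Q pre r.
Proof.
elim: r P Q pre => [|x r IH] P Q pre /=; first by rewrite coefD omega_formDl.
by rewrite -big_split /=; apply: eq_bigr => k _; rewrite mulrDl IH.
Qed.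

Lemma coef_t_poly0 pre r : coef_t 0 pre r = 0.
Proof. by apply: (addIr (coef_t 0 pre r)); rewrite -coef_t_polyD !add0r. Qed.

Lemma coef_t_XnM N Q pre r : (e < N)%N -> coef_t ('X^N * Q) pre r = 0.
Proof.
move=> lt_eN; elim: r Q pre => [|x r IH] Q pre /=; first by rewrite coefXnM lt_eN omega_form0l.
by apply: big1 => k _; rewrite -mulrA IH.
Qed.

Lemma coef_t_preD P pre1 pre2 u v r : coef_t P (pre1 ++ (u + v) :: pre2) r =
  coef_t P (pre1 ++ u :: pre2) r + coef_t P (pre1 ++ v :: pre2) r.
Proof.
elim: r P pre2 => [|x r IH] P pre2 /=; first exact: omega_formDr.
by rewrite -big_split; apply: eq_bigr => k _; rewrite !rcons_cat /= IH.
Qed.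

Lemma coef_t_pre0 P pre1 pre2 r : coef_t P (pre1 ++ 0 :: pre2) r = 0.
Proof. by apply: (addIr (coef_t P (pre1 ++ 0 :: pre2) r)); rewrite -coef_t_preD !add0r. Qed.

Lemma coef_t_preM P pre1 pre2 u v r : coef_t P (pre1 ++ (u * v) :: pre2) r =
  coef_t (P * u%:P) (pre1 ++ v :: pre2) r + coef_t (P * v%:P) (pre1 ++ u :: pre2) r.
Proof.
elim: r P pre2 => [|x r IH] P pre2 /=; first by rewrite omega_formMr !coefMC.
rewrite -big_split; apply: eq_bigr => k _; rewrite !rcons_cat /= IH.
by rewrite ![_ * _%:P * 'X^k]mulrAC.
Qed.

Lemma coef_t_pre_swap P pre1 pre2 u v r :
  coef_t P (pre1 ++ u :: v :: pre2) r = - coef_t P (pre1 ++ v :: u :: pre2) r.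
Proof.
elim: r P pre2 => [|x r IH] P pre2 /=; first exact: omega_form_swap.
by rewrite -sumrN; apply: eq_bigr => k _; rewrite !rcons_cat /= IH.
Qed.

Lemma coef_tD P pre q x y r :
  coef_t P pre (q ++ (x + y) :: r) = coef_t P pre (q ++ x :: r) + coef_t P pre (q ++ y :: r).
Proof.
elim: q P pre => [|z q IH] P pre /=; rewrite -big_split; apply: eq_bigr => k _ /=.
  by rewrite coefD -!cats1 coef_t_preD.
exact: IH.
Qed.

Lemma coef_t_tmonomial P pre u k r :
  coef_t P pre (tmonomial m u k :: r) = coef_t (P * 'X^k) (rcons pre u) r.
Proof.
rewrite /=; have [le_km|lt_mk] := leqP k m.
  rewrite (bigD1 (Ordinal (le_km : (k < m.+1)%N))) //= coef_tmonomial le_km eqxx /=.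
  rewrite big1 ?addr0 // => j /negbTE; rewrite -val_eqE /= => jk.
  by rewrite coef_tmonomial jk andbF -cats1 coef_t_pre0.
rewrite big1; last by move=> j _; rewrite coef_tmonomial leqNgt lt_mk -cats1 coef_t_pre0.
by rewrite mulrC coef_t_XnM // (ltn_trans lt_em lt_mk).
Qed.

Lemma coef_t_Rincl P pre s : coef_t P pre (map (Rincl m) s) = form P`_e (pre ++ s).
Proof.
elim: s P pre => [|u s IH] P pre; first by rewrite /= cats0.
by rewrite map_cons Rincl_tmonomial coef_t_tmonomial IH expr0 mulr1 cat_rcons.
Qed.

Lemma coef_tM_head P pre x y r : coef_t P pre ((x * y) :: r) =
  coef_t (P * x%:poly) pre (y :: r) + coef_t (P * y%:poly) pre (x :: r).
Proof.
move: x; apply: Rtrunc_additive_eq => [x1 x2|x1 x2|u k le_km].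
- by rewrite mulrDl (coef_tD P pre [::]).
- by rewrite poly_of_qpolyD mulrDr coef_t_polyD (coef_tD _ pre [::]) addrACA.
move: y; apply: Rtrunc_additive_eq => [y1 y2|y1 y2|v l le_lm].
- by rewrite mulrDr (coef_tD P pre [::]).
- by rewrite poly_of_qpolyD mulrDr coef_t_polyD (coef_tD _ pre [::]) addrACA.
rewrite tmonomialM !coef_t_tmonomial -!cats1 coef_t_preM !poly_tmonomial le_km le_lm.
by rewrite exprD; congr (coef_t _ _ _ + coef_t _ _ _); ring.
Qed.

Lemma coef_tM P pre q x y r : coef_t P pre (q ++ (x * y) :: r) =
  coef_t (P * x%:poly) pre (q ++ y :: r) + coef_t (P * y%:poly) pre (q ++ x :: r).
Proof.
elim: q P pre => [|z q IH] P pre; first exact: coef_tM_head.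
rewrite /= -big_split; apply: eq_bigr => k _ /=.
by rewrite IH ![_ * _%:poly * 'X^k]mulrAC.
Qed.

Lemma coef_t_swap P pre q x y r :
  coef_t P pre (q ++ x :: y :: r) = - coef_t P pre (q ++ y :: x :: r).
Proof.
elim: q P pre => [|z q IH] P pre /=; last first.
  by rewrite -sumrN; apply: eq_bigr => k _; rewrite IH.
rewrite exchange_big -sumrN; apply: eq_bigr => k _ /=.
rewrite -sumrN; apply: eq_bigr => l _ /=.
by rewrite -!cats1 -!catA /= coef_t_pre_swap mulrAC.
Qed.

(* [coef_dt P pre r] is the coefficient of t^e dt in P(t) d(pre) dx_1 ... dx_j, where
   dx_i = sum_k t^k dx_ik + x_i' dt; the dt is moved to the front, whence the sign. *)
Fixpoint coef_dt P pre r : Omega R n :=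
  if r is x :: r' then
    \sum_(k < m.+1) coef_dt (P * 'X^k) (rcons pre x%:poly`_k) r'
    + coef_t (P * x%:poly^`()) pre r' *~ (-1) ^+ size pre
  else 0.

Lemma coef_dt_polyD P Q pre r : coef_dt (P + Q) pre r = coef_dt P pre r + coef_dt Q pre r.
Proof.
elim: r P Q pre => [|x r IH] P Q pre /=; first by rewrite addr0.
rewrite addrACA -big_split /= mulrDl coef_t_polyD mulrzDl; congr (_ + _).
by apply: eq_bigr => k _; rewrite mulrDl IH.
Qed.

Lemma coef_dt_XnM N Q pre r : (e < N)%N -> coef_dt ('X^N * Q) pre r = 0.
Proof.
move=> lt_eN; elim: r Q pre => [|x r IH] Q pre //=.
rewrite big1 ?add0r; last by move=> k _; rewrite -mulrA IH.
by rewrite -mulrA coef_t_XnM // mul0rz.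
Qed.

Lemma coef_dt_preD P pre1 pre2 u v r : coef_dt P (pre1 ++ (u + v) :: pre2) r =
  coef_dt P (pre1 ++ u :: pre2) r + coef_dt P (pre1 ++ v :: pre2) r.
Proof.
elim: r P pre2 => [|x r IH] P pre2 /=; first by rewrite addr0.
rewrite addrACA -big_split /= coef_t_preD !size_cat /= mulrzDl; congr (_ + _).
by apply: eq_bigr => k _; rewrite !rcons_cat /= IH.
Qed.

Lemma coef_dt_pre0 P pre1 pre2 r : coef_dt P (pre1 ++ 0 :: pre2) r = 0.
Proof. by apply: (addIr (coef_dt P (pre1 ++ 0 :: pre2) r)); rewrite -coef_dt_preD !add0r. Qed.

Lemma coef_dt_preM P pre1 pre2 u v r : coef_dt P (pre1 ++ (u * v) :: pre2) r =
  coef_dt (P * u%:P) (pre1 ++ v :: pre2) r + coef_dt (P * v%:P) (pre1 ++ u :: pre2) r.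
Proof.
elim: r P pre2 => [|x r IH] P pre2 /=; first by rewrite addr0.
rewrite addrACA -big_split /= coef_t_preM !size_cat /= mulrzDl; congr (_ + _).
  by apply: eq_bigr => k _; rewrite !rcons_cat /= IH ![_ * _%:P * 'X^k]mulrAC.
by rewrite ![_ * _%:P * _^`()]mulrAC.
Qed.

Lemma coef_dt_pre_swap P pre1 pre2 u v r :
  coef_dt P (pre1 ++ u :: v :: pre2) r = - coef_dt P (pre1 ++ v :: u :: pre2) r.
Proof.
elim: r P pre2 => [|x r IH] P pre2 /=; first by rewrite oppr0.
rewrite opprD -sumrN coef_t_pre_swap !size_cat /= mulNrz; congr (_ + _).
by apply: eq_bigr => k _; rewrite !rcons_cat /= IH.
Qed.

Lemma coef_dtD P pre q x y r : coef_dt P pre (q ++ (x + y) :: r) =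
  coef_dt P pre (q ++ x :: r) + coef_dt P pre (q ++ y :: r).
Proof.
elim: q P pre => [|z q IH] P pre /=.
  rewrite addrACA -big_split /= derivD mulrDr coef_t_polyD mulrzDl; congr (_ + _).
  by apply: eq_bigr => k _; rewrite coefD -!cats1 coef_dt_preD.
rewrite addrACA -big_split /= coef_tD mulrzDl; congr (_ + _).
by apply: eq_bigr => k _; rewrite IH.
Qed.

Lemma coef_dt_tmonomial P pre u k r : coef_dt P pre (tmonomial m u k :: r) =
  coef_dt (P * 'X^k) (rcons pre u) r
  + coef_t (P * (tmonomial m u k)%:poly^`()) pre r *~ (-1) ^+ size pre.
Proof.
rewrite [LHS]/=; congr (_ + _); have [le_km|lt_mk] := leqP k m.
  rewrite (bigD1 (Ordinal (le_km : (k < m.+1)%N))) //= coef_tmonomial le_km eqxx /=.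
  rewrite big1 ?addr0 // => j /negbTE; rewrite -val_eqE /= => jk.
  by rewrite coef_tmonomial jk andbF -cats1 coef_dt_pre0.
rewrite big1; last by move=> j _; rewrite coef_tmonomial leqNgt lt_mk -cats1 coef_dt_pre0.
by rewrite mulrC coef_dt_XnM // (ltn_trans lt_em lt_mk).
Qed.

Lemma coef_dt_Rincl P pre s : coef_dt P pre (map (Rincl m) s) = 0.
Proof.
elim: s P pre => [|u s IH] P pre //.
rewrite map_cons Rincl_tmonomial coef_dt_tmonomial IH poly_tmonomial leq0n expr0 mulr1.
by rewrite derivC mulr0 coef_t_poly0 mul0rz addr0.
Qed.

Lemma coef_dt_polyM P x y r :
  coef_dt (P * (x * y)%:poly) [::] r = coef_dt (P * x%:poly * y%:poly) [::] r.
Proof.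
have [Q ->] := poly_RtruncM x y.
rewrite mulrDr coef_dt_polyD [P * (_ * Q)]mulrCA coef_dt_XnM ?addr0 ?mulrA //.
exact: ltn_trans lt_em (ltnSn m).
Qed.

Lemma coef_t_derivM P pre r x y : coef_t (P * (x * y)%:poly^`()) pre r =
  coef_t (P * x%:poly * y%:poly^`()) pre r + coef_t (P * y%:poly * x%:poly^`()) pre r.
Proof.
have [Q ->] := poly_RtruncM x y; rewrite derivD; have [Q' ->] := deriv_XnSM m Q.
rewrite derivM mulrDr coef_t_polyD [P * ('X^m * Q')]mulrCA coef_t_XnM // addr0.
by rewrite mulrDr coef_t_polyD addrC; congr (coef_t _ _ _ + coef_t _ _ _); ring.
Qed.

Lemma coef_dtM_head P pre x y r : coef_dt P pre ((x * y) :: r) =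
  coef_dt (P * x%:poly) pre (y :: r) + coef_dt (P * y%:poly) pre (x :: r).
Proof.
move: x; apply: Rtrunc_additive_eq => [x1 x2|x1 x2|u k le_km].
- by rewrite mulrDl (coef_dtD P pre [::]).
- by rewrite poly_of_qpolyD mulrDr coef_dt_polyD (coef_dtD _ pre [::]) addrACA.
move: y; apply: Rtrunc_additive_eq => [y1 y2|y1 y2|v l le_lm].
- by rewrite mulrDr (coef_dtD P pre [::]).
- by rewrite poly_of_qpolyD mulrDr coef_dt_polyD (coef_dtD _ pre [::]) addrACA.
rewrite [in LHS]tmonomialM [in LHS]coef_dt_tmonomial -[in LHS]tmonomialM.
rewrite coef_t_derivM mulrzDl (coef_dt_tmonomial _ _ v) (coef_dt_tmonomial _ _ u).
rewrite -!cats1 coef_dt_preM !poly_tmonomial le_km le_lm.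
have -> : P * 'X^(k + l)%N * u%:P = P * (u%:P * 'X^k) * 'X^l by rewrite exprD; ring.
have -> : P * 'X^(k + l)%N * v%:P = P * (v%:P * 'X^l) * 'X^k by rewrite exprD; ring.
by rewrite addrACA.
Qed.

Lemma coef_dtM P pre q x y r : coef_dt P pre (q ++ (x * y) :: r) =
  coef_dt (P * x%:poly) pre (q ++ y :: r) + coef_dt (P * y%:poly) pre (q ++ x :: r).
Proof.
elim: q P pre => [|z q IH] P pre; first exact: coef_dtM_head.
rewrite /= addrACA -big_split /= coef_tM -mulrzDl; congr (_ + _).
  by apply: eq_bigr => k _; rewrite IH ![_ * _%:poly * 'X^k]mulrAC.
by rewrite ![_ * _%:poly * _^`()]mulrAC.
Qed.

Lemma coef_dt_swap_head P pre x y r :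
  coef_dt P pre (x :: y :: r) + coef_dt P pre (y :: x :: r) = 0.
Proof.
rewrite /= !mulrz_suml !big_split /= addrACA [X in X + _]addrACA [X in _ + X]addrC.
rewrite -addrA [X in _ + X]addrACA [X in X + _ + _]exchange_big -big_split big1 ?add0r.
  rewrite -!big_split /= big1 // => k _.
  rewrite !size_rcons !(exprS (-1 : int)) !mulN1r !mulrNz.
  by rewrite ![P * 'X^k * _]mulrAC !addNr addr0.
move=> k _; rewrite -big_split /= big1 // => l _.
by rewrite -!cats1 -!catA /= coef_dt_pre_swap mulrAC addNr.
Qed.

Lemma coef_dt_swap P pre q x y r :
  coef_dt P pre (q ++ x :: y :: r) = - coef_dt P pre (q ++ y :: x :: r).
Proof.
elim: q P pre => [|z q IH] P pre.
  by apply/eqP; rewrite -addr_eq0; apply/eqP; apply: coef_dt_swap_head.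
rewrite /= opprD -sumrN coef_t_swap mulNrz; congr (_ + _).
by apply: eq_bigr => k _; rewrite IH.
Qed.

Lemma coef_dt_transpose P pre p x q y r :
  coef_dt P pre (p ++ x :: q ++ y :: r) = - coef_dt P pre (p ++ y :: q ++ x :: r).
Proof. by apply: alt_swap => {}p {}x {}y {}r; apply: coef_dt_swap. Qed.

Definition coef_dt_form (k : Rm * seq Rm) : Omega R n :=
  coef_dt (c%:P * k.1%:poly) [::] k.2.

Lemma coef_dt_form_gen (two_unit : exists h : R, 2%:R * h = 1) g :
  omega_gen n.+1 g -> fsum_eval coef_dt_form g = 0.
Proof.
case=> {g} [a a' b _ | a b i x y sb lt_in | a b i x y sb lt_in | a b i j sb lt_ij lt_jn bij |
  a b i j sb lt_ij lt_jn];
  rewrite ?fsum_eval3 ?fsum_eval2 ?fsum_eval1 /coef_dt_form; cbn [fst snd].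
- by rewrite poly_of_qpolyD mulrDr coef_dt_polyD -addrA -opprD subrr.
- by rewrite !set_nthE sb lt_in coef_dtD -addrA -opprD subrr.
- rewrite !set_nthE sb lt_in coef_dtM // !(coef_dt_polyM c%:P).
  by rewrite -addrA -opprD subrr.
- have [|p [q [r [Eb _ _]]]] := @split_at2 _ 0 b i j; first by rewrite lt_ij sb.
  rewrite -bij in Eb; have [h h2] := two_unit.
  (* a form with a repeated entry is its own negative, so split it into two halves *)
  have -> : c%:P * a%:poly = c%:P * a%:poly * h%:P + c%:P * a%:poly * h%:P.
    by rewrite -mulrDr -polyCD -mulr2n -mulr_natl h2 mulr1.
  by rewrite coef_dt_polyD {1}Eb coef_dt_transpose -Eb addNr.
have [|p [q [r [Eb <- <-]]]] := @split_at2 _ 0 b i j; first by rewrite lt_ij sb.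
by rewrite {2}Eb swap_at_cat {1}Eb coef_dt_transpose addNr.
Qed.

Lemma coef_dt_form_d i a s : (i < m)%N ->
  coef_dt_form (1, tvar R m ^+ i.+1 * Rincl m a :: map (Rincl m) s) =
  if i == e then form (c * a *+ e.+1) s else 0.
Proof.
move=> lt_im; rewrite /coef_dt_form; cbn [fst snd].
have -> : (1 : Rm)%:poly = 1 by rewrite /= polyC1.
rewrite mulr1 mulrC -/(tmonomial m a i.+1).
rewrite coef_dt_tmonomial // coef_dt_Rincl // add0r expr0 mulr1z coef_t_Rincl //.
rewrite poly_tmonomial lt_im coefCM coef_deriv coefCM coefXn eqSS cat0s.
have [_|_] := eqVneq e i; first by rewrite mulr1 mulrnAr.
by rewrite mulr0n mulr0 mul0rn mulr0 omega_form0l.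
Qed.

Lemma coef_dt_form_d_tensor (w : 'I_m -> fsum R) (i : 'I_m) : val i = e ->
  fsum_eval coef_dt_form (d_tensor w)
  = fsum_eval (fun k => form (c * k.1 *+ e.+1) k.2) (w i).
Proof.
move=> ie; rewrite /d_tensor /dform /fsum_eval big_map big_flatten big_map big_enum /=.
rewrite (bigD1 i) //= [X in _ + X]big1 => [|j ji]; rewrite /scal_fsum /map_fsum !big_map.
  by rewrite addr0; apply: eq_bigr => p _ /=; rewrite coef_dt_form_d // ie eqxx.
apply: big1 => p _ /=; rewrite coef_dt_form_d // ifN ?mul0rz //.
by rewrite -ie val_eqE.
Qed.

End Coefficients.

Unset Implicit Arguments.

Theorem lemma8p5 (R : comNzRingType) (n m : nat) :
  semilocal R -> contains_Q R -> (1 <= m)%N ->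
  forall w : 'I_m -> fsum R,
    (forall i, omega_elt n (w i)) ->
    omega_zero n.+1 (d_tensor w) ->
    forall i, omega_zero n (w i).
Proof.
move=> _ QR _ w w_elt dw0 i.
have [c c_inv] := QR (val i).+1 (ltn0Sn _).
apply/omega_class_eq0; rewrite omega_class_elt //.
have -> : fsum_eval (fun k => omega_form n k.1 k.2) (w i)
        = fsum_eval (fun k => omega_form n (c * k.1 *+ (val i).+1) k.2) (w i).
  by apply: eq_bigr => p _; rewrite -mulrnAl -mulr_natl c_inv mul1r.
rewrite -(coef_dt_form_d_tensor n c (ltn_ord i) w (erefl _)).
exact: fsum_eval_omega_zero (coef_dt_form_gen c (ltn_ord i) (QR 2 isT)) _ dw0.
Qed.
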